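(* Let $H$ be the $3$-uniform hypergraph on vertex set $[6]$ with edges $\{1,2,3\},\{3,4,5\},\{1,5,6\}$. Then the $h$-vector of the coloring complex $\Delta_H$ is $(1,33,39,-1)$. Consequently there exist uniform hypergraphs $H$ such that $h(\Delta_H)$ has a negative entry and $\Delta_H$ is not partitionable.
   Context: The coloring complex $\Delta_H$ of a hypergraph $H=([n],E)$ is the abstract simplicial complex whose vertices are the nonempty proper subsets of $[n]$ and whose faces are the chains $\emptyset\neq A_1\subsetneq\cdots\subsetneq A_l\neq[n]$ ($l\ge0$) such that, with $A_0=\emptyset$, $A_{l+1}=[n]$, some difference $A_i\setminus A_{i-1}$ ($1\le i\le l+1$) contains an edge of $H$. For a $(d-1)$-dimensional complex with $f_i$ faces of dimension $i$ ($f_{-1}=1$), the $h$-vector $(h_0,\dots,h_d)$ is defined by $\sum_i h_i t^{d-i}=\sum_i f_{i-1}(t-1)^{d-i}$. A simplicial complex $\Delta$ with facets $F_1,\dots,F_m$ is partitionable if $\Delta=\bigsqcup_{j=1}^m[G_j,F_j]$ (disjoint union) for some faces $G_j\subseteq F_j$, where $[G,F]=\{K: G\subseteq K\subseteq F\}$. *)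

From HB Require Import structures.
From mathcomp Require Import all_boot all_order all_algebra.
Set Implicit Arguments. Unset Strict Implicit. Unset Printing Implicit Defensive.
Import Order.TTheory GRing.Theory Num.Theory.

(* Hypergraph on vertex set [n] = 'I_n (vertex i+1 of the paper is i here),
   given by its set of edges. *)
Definition uniform (n k : nat) (E : {set {set 'I_n}}) : bool :=
  [forall e in E, #|e| == k].

(* Faces of the coloring complex: a face is a set F of vertices, vertices being
   nonempty proper subsets of [n]; F must be a chain A_1 ⊊ ... ⊊ A_l, and with
   A_0 = ∅, A_(l+1) = [n], some consecutive difference A_i \ A_(i-1) contains an
   edge.  Consecutive pairs (B, A) are the pairs B ⊊ A in F ∪ {∅, [n]}
   (B in F ∪ {∅}, A in F ∪ {[n]}) with no C ∈ F strictly between them. *)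
Definition ccface (n : nat) (E : {set {set 'I_n}}) (F : {set {set 'I_n}}) : bool :=
  [&& [forall A in F, (A != set0) && (A != [set: 'I_n])],
      [forall A in F, forall B in F, (A \subset B) || (B \subset A)] &
      [exists e in E, exists A in [set: 'I_n] |: F, exists B in set0 |: F,
         [&& B \proper A, e \subset A :\: B &
             [forall C in F, ~~ ((B \proper C) && (C \proper A))]]]].

Section Complex.
Variable V : finType.
Variable face : {set V} -> bool.

(* d = dim + 1 = maximal face size *)
Definition cdim1 : nat := \max_(F : {set V} | face F) #|F|.

(* number of faces of size i, i.e. f_(i-1) *)
Definition fnum (i : nat) : nat := #|[set F : {set V} | face F & #|F| == i]|.

(* sum_i h_i t^(d-i) = sum_(i=0)^d f_(i-1) (t-1)^(d-i) *)
Definition hpoly : {poly int} :=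
  \sum_(i < cdim1.+1) (((fnum i)%:Z)%:P * ('X - 1) ^+ (cdim1 - i))%R.

Definition hvector : seq int := [seq (hpoly`_(cdim1 - k))%R | k <- iota 0 cdim1.+1].

Definition facet (F : {set V}) : Prop :=
  face F /\ forall K : {set V}, face K -> F \subset K -> K = F.

(* Δ = disjoint union over its facets F of intervals [G F, F]. *)
Definition partitionable : Prop :=
  exists G : {set V} -> {set V},
    (forall F, facet F -> G F \subset F) /\
    (forall F K : {set V}, facet F -> G F \subset K -> K \subset F -> face K) /\
    (forall K, face K ->
       exists F, (facet F /\ G F \subset K /\ K \subset F) /\
         forall F', facet F' /\ G F' \subset K /\ K \subset F' -> F' = F).
End Complex.

Definition coloring_complex (n : nat) (E : {set {set 'I_n}}) := ccface E.

Definition H6 : {set {set 'I_6}} :=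
  [set [set (inord 0 : 'I_6); inord 1; inord 2];
       [set (inord 2 : 'I_6); inord 3; inord 4];
       [set (inord 0 : 'I_6); inord 4; inord 5]].

From HB Require Import structures.
From mathcomp Require Import all_boot all_order all_algebra.
From mathcomp Require Import zify ring.
Set Implicit Arguments. Unset Strict Implicit. Unset Printing Implicit Defensive.
Import Order.TTheory GRing.Theory Num.Theory.

(* The coloring complex of H6 (edges {1,2,3}, {3,4,5}, {1,5,6} on [6]) has
   f-vector (f_-1, f_0, f_1, f_2) = (1, 36, 108, 72), whence dimension 2 and
   h-vector (1, 33, 39, -1); it is not partitionable.

   The facets then
     have 1 or 3 vertices while the alternating count is 1 - 36 + 108 - 72 = 1,
     so H6 is not partitionable. *)

Section EulerCharacteristic.
Variables (T : finType) (face : {set T} -> bool).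
Local Open Scope ring_scope.

Definition facetb (F : {set T}) : bool :=
  face F && [forall K, (face K && (F \subset K)) ==> (K == F)].

Lemma facetP F : reflect (facet face F) (facetb F).
Proof.
apply: (iffP andP) => [[fF /forallP maxF]|[fF maxF]]; split=> //.
  by move=> K fK FK; apply/eqP/(implyP (maxF K)); rewrite fK.
by apply/forallP => K; apply/implyP => /andP[fK FK]; rewrite (maxF K).
Qed.

Lemma euler_fvector :
  \sum_(K | face K) (-1) ^+ #|K| =
  \sum_(i < (cdim1 face).+1) (-1) ^+ i *+ fnum face i :> int.
Proof.
set d := cdim1 face.
have le_d K : face K -> (#|K| < d.+1)%N.
  by move=> fK; apply: (@leq_bigmax_cond _ face (fun F => #|F|) K fK).
rewrite (partition_big (fun K : {set T} => inord #|K| : 'I_d.+1) xpredT) //=.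
apply: eq_bigr => i _; rewrite /fnum -sumr_const.
rewrite big_mkcond [RHS]big_mkcond /=; apply: eq_bigr => K _; rewrite !inE.
case fK: (face K) => //=; rewrite -val_eqE /= inordK ?le_d //.
by case: eqP => // <-.
Qed.

(* Alternating sums over a Boolean interval [G, F] vanish unless G = F: toggling
   a fixed element of F :\: G is a sign-reversing involution of the interval. *)
Lemma alt_interval (G F : {set T}) : G \subset F ->
  \sum_(K : {set T} | (G \subset K) && (K \subset F)) (-1) ^+ #|K| =
  (if G == F then (-1) ^+ #|F| else 0) :> int.
Proof.
move=> GF; have [<-|neqGF] := eqVneq G F.
  rewrite (eq_bigl (pred1 G : pred {set T})) ?big_pred1_eq // => K /=.
  by rewrite eq_sym eqEsubset andbC.
have [x /setDP[xF xNG]] : exists x, x \in F :\: G.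
  by apply/set0Pn; rewrite setD_eq0; apply: contra neqGF => FG; rewrite eqEsubset GF.
pose t (K : {set T}) : {set T} := if x \in K then K :\ x else x |: K.
have tK : involutive t.
  by move=> K; rewrite /t; case: (boolP (x \in K)) => xK;
    rewrite ?(setD11, setD1K xK) ?(setU11, setU1K xK).
set S := \sum_(K | _) _; suff : S = - S by lia.
have memI (K : {set T}) :
    (G \subset K) && (K \subset F) = (G \subset K :\ x) && (x |: K \subset F).
  by rewrite subsetD1 xNG andbT subUset sub1set xF.
have tKD (K : {set T}) : t K :\ x = K :\ x /\ x |: t K = x |: K.
  by split; apply/setP => y; rewrite /t; case: ifP => xK; rewrite !inE;
    case: eqP => // ->.
rewrite {1}/S (reindex_inj (inv_inj tK)) -sumrN; apply: eq_big => K.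
  by rewrite !memI; case: (tKD K) => -> ->.
move=> _; rewrite /t; case: ifP => xK.
  by rewrite [in RHS](cardsD1 x K) xK exprS mulN1r opprK.
by rewrite cardsU1 xK exprS mulN1r.
Qed.

(* In a partition into intervals [G F, F] over the facets, only the trivial
   intervals G F = F contribute to the alternating face count; if all facets
   have odd size, that count is therefore nonpositive. *)
Lemma odd_facets_not_partitionable :
  (forall F, facet face F -> odd #|F|) ->
  0 < \sum_(K | face K) (-1) ^+ #|K| :> int -> ~ partitionable face.
Proof.
move=> oddF euler_gt0 [G [GF [intervalF coverK]]].
have partition_sum : \sum_(K | face K) (-1) ^+ #|K| =
    \sum_(F | facetb F) (if G F == F then (-1) ^+ #|F| else 0) :> int.
  transitivity (\sum_(K | face K)
      \sum_(F | facetb F && (G F \subset K) && (K \subset F)) (-1) ^+ #|K| : int).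
    apply: eq_bigr => K fK; have [F [[fctF [GFK KF]] uniqF]] := coverK K fK.
    rewrite (big_pred1 F) // => F' /=.
    apply/idP/eqP => [/andP[/andP[/facetP ? ?] ?]|->]; first exact: uniqF.
    by rewrite GFK KF !andbT; apply/facetP.
  rewrite (exchange_big_dep facetb) => [|K F _ /andP[/andP[]] //].
  apply: eq_bigr => F fF; have /facetP fctF := fF.
  rewrite -alt_interval ?GF //; apply: eq_bigl => K; rewrite fF /=.
  apply/andP/idP => [[_ //]|GFKF]; split=> //.
  by case/andP: GFKF; apply: intervalF.
have : \sum_(F | facetb F) (if G F == F then (-1) ^+ #|F| else 0) <= 0 :> int.
  apply: sumr_le0 => F /facetP /oddF oddF'.
  by case: eqP => // _; rewrite -signr_odd oddF'.
by rewrite -partition_sum leNgt euler_gt0.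
Qed.
End EulerCharacteristic.

Section Chains.
Variable T : finType.

Definition proper_rel : rel {set T} := fun A B => A \proper B.

Definition chain (F : {set {set T}}) : bool :=
  [forall A in F, forall B in F, (A \subset B) || (B \subset A)].

Lemma proper_rel_trans : transitive proper_rel.
Proof. by move=> B A C; apply: proper_trans. Qed.

Lemma proper_rel_irr : irreflexive proper_rel.
Proof. exact: properxx. Qed.

Lemma pairwise_proper s :
  pairwise (fun A B : {set T} => A \subset B) s -> uniq s -> pairwise proper_rel s.
Proof.
elim: s => //= A s IHs /andP[subAs pw_s] /andP[Anotin uniq_s].
rewrite IHs // andbT; apply/allP => B Bs; rewrite /proper_rel properEneq.
by rewrite (allP subAs B Bs) andbT; apply: contraNneq Anotin => ->.
Qed.

Lemma chain_sorted F : chain F ->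
  exists s, [/\ sorted proper_rel s, [set:: s] = F & size s = #|F|].
Proof.
move=> chF; pose s := sort (fun A B : {set T} => A \subset B) (enum F).
have total_sub : {in F &, total (fun A B : {set T} => A \subset B)}.
  by move=> A B AF BF; move/forall_inP: chF => /(_ A AF) /forall_inP; apply.
have s_sorted : sorted (fun A B : {set T} => A \subset B) s.
  by apply: (sort_sorted_in total_sub); apply/allP => A; rewrite mem_enum.
have s_uniq : uniq s by rewrite sort_uniq enum_uniq.
exists s; split; last by rewrite size_sort cardE.
  apply/pairwise_sorted/pairwise_proper => //.
  by rewrite -sorted_pairwise // => B A C; apply: subset_trans.
by apply/setP => A; rewrite inE mem_sort mem_enum.
Qed.

Lemma card_sorted s : sorted proper_rel s -> #|[set:: s]| = size s.
Proof.
move=> s_sorted; rewrite cardsE; apply/card_uniqP.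
exact: sorted_uniq proper_rel_trans proper_rel_irr s s_sorted.
Qed.

Lemma card_chains (P : {set {set T}} -> bool) k (U : finType) (g : U -> seq {set T}) :
  (forall F, P F -> chain F) -> injective g -> (forall u, size (g u) = k) ->
  (forall s, size s = k -> exists u, g u = s) ->
  #|[set F | P F & #|F| == k]| = #|[set u | sorted proper_rel (g u) && P [set:: g u]]|.
Proof.
move=> chP g_inj g_size g_onto.
rewrite -(@card_in_imset _ _ (fun u => [set:: g u])); last first.
  move=> u v; rewrite !inE => /andP[u_sorted _] /andP[v_sorted _] /setP eq_uv.
  apply: g_inj; apply: (irr_sorted_eq proper_rel_trans proper_rel_irr) => // A.
  by have := eq_uv A; rewrite !inE.
apply: eq_card => F; rewrite inE; apply/andP/imsetP => [[PF /eqP cardF]|[u]].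
  have [s [s_sorted sF s_size]] := chain_sorted (chP F PF).
  have [u gu] := g_onto s (etrans s_size cardF).
  by exists u; rewrite ?inE gu ?sF ?s_sorted.
by rewrite inE => /andP[u_sorted Pu] ->; rewrite card_sorted ?g_size.
Qed.

Lemma chain_card_inj F : chain F -> {in F &, injective (fun A : {set T} => #|A|)}.
Proof.
move=> chF A B AF BF eqAB.
move/forall_inP: chF => /(_ A AF) /forall_inP /(_ B BF) /orP[AB|BA].
  by apply/eqP; rewrite eqEcard AB eqAB leqnn.
by apply/esym/eqP; rewrite eqEcard BA eqAB leqnn.
Qed.

Lemma consecutive_gap F A B C : chain F ->
  A \in [set: T] |: F -> B \in set0 |: F ->
  [forall C in F, ~~ ((B \proper C) && (C \proper A))] ->
  C \in F -> (C \subset B) || (A \subset C).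
Proof.
move=> /forall_inP chF Ain Bin /forall_inP noC CF.
have cmp X : X \in F -> (C \subset X) || (X \subset C).
  by move=> XF; move/forall_inP: (chF C CF); apply.
apply/orP; have [CB|notCB] := boolP (C \subset B); [by left | right].
have BC : B \proper C.
  move: Bin; rewrite !inE => /orP[/eqP B0|BF].
    by rewrite B0 proper0; apply: contraNneq notCB => ->; rewrite B0.
  by rewrite properE notCB andbT; case/orP: (cmp B BF) notCB => ->.
have notCA := noC C CF; rewrite BC /= in notCA.
have CA : (C \subset A) || (A \subset C).
  by move: Ain; rewrite !inE => /orP[/eqP ->|/cmp //]; rewrite subsetT.
by case/orP: CA => // CA; move: notCA; rewrite properE CA negbK.
Qed.
End Chains.

(* In the coloring complex of a k-uniform hypergraph on [n], the members of a
   face have pairwise distinct sizes in (0, n) avoiding the k - 1 values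
   strictly between the sizes of the consecutive pair B ⊊ A enclosing an edge;
   hence faces have at most n - k vertices. *)
Lemma coloring_face_card n k (E : {set {set 'I_n}}) F :
  uniform k E -> ccface E F -> #|F| <= n - k.
Proof.
move=> /forall_inP unifE /and3P[/forall_inP proper_mem chF].
case/exists_inP => e eE /exists_inP[A Ain /exists_inP[B Bin /and3P[BA eAB gap]]].
have gapAB : #|B| + k <= #|A|.
  have := subset_leq_card eAB; rewrite (eqP (unifE e eE)) cardsD.
  have := subset_leq_card (proper_sub BA); rewrite (setIidPr (proper_sub BA)); lia.
have A_le_n : #|A| <= n by have := max_card A; rewrite card_ord.
have sizeC C : C \in F -> [/\ 0 < #|C|, #|C| < n & (#|C| <= #|B|) || (#|B| + k <= #|C|)].
  move=> CF; have /andP[C0 CT] := proper_mem C CF; split.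
  - by rewrite card_gt0.
  - by have := proper_card (_ : C \proper setT); rewrite properT cardsT card_ord; apply.
  case/orP: (consecutive_gap chF Ain Bin gap CF) => /subset_leq_card le_card.
    by rewrite le_card.
  by rewrite (leq_trans gapAB le_card) orbT.
have ->: n - k = size (iota 1 #|B| ++ iota (#|B| + k) (n - (#|B| + k))).
  by rewrite size_cat !size_iota; lia.
rewrite cardE -(size_map (fun C : {set 'I_n} => #|C|)).
apply: uniq_leq_size => [|x /mapP[C]].
  by rewrite map_inj_in_uniq ?enum_uniq // => C D; rewrite !mem_enum; apply: chain_card_inj.
rewrite mem_enum => /sizeC[C0 Cn gapC] ->; rewrite mem_cat !mem_iota.
case/orP: gapC => [le_C|ge_C]; apply/orP; [left|right]; lia.
Qed.

Fixpoint bitseqs (m : nat) : seq (seq bool) :=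
  if m is m'.+1 then [seq false :: x | x <- bitseqs m'] ++ [seq true :: x | x <- bitseqs m']
  else [:: [::]].

Lemma mem_bitseqs m x : (x \in bitseqs m) = (size x == m).
Proof.
elim: m x => [|m IHm] [|b x] //=; rewrite mem_cat.
  by apply/norP; split; apply/mapP => -[].
have mem_cons c s : (b :: x \in [seq c :: y | y <- s]) = (b == c) && (x \in s).
  by apply/mapP/andP => [[y ys [-> ->]]|[/eqP -> xs]]; [rewrite eqxx | exists x].
by rewrite !mem_cons eqSS -IHm; case: (b); rewrite /= ?orbF.
Qed.

Lemma bitseqs_uniq m : uniq (bitseqs m).
Proof.
elim: m => //= m IHm; have cons_inj c : injective (fun x : seq bool => c :: x).
  by move=> ? ? [].
rewrite cat_uniq !(map_inj_uniq (cons_inj _)) IHm /= andbT.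
by apply/hasPn => _ /mapP[x _ ->]; apply/mapP => -[].
Qed.

Section BitModel.
Variable n : nat.

Definition bit (x : seq bool) (i : nat) : bool := nth false x i.
Definition set_of_bits (x : seq bool) : {set 'I_n} := [set i : 'I_n | bit x i].
Definition bits_of_set (X : {set 'I_n}) : seq bool := [seq i \in X | i <- enum 'I_n].

Lemma bits_of_setK X : set_of_bits (bits_of_set X) = X.
Proof.
apply/setP => i; rewrite inE /bit (nth_map i) ?nth_ord_enum //.
by rewrite size_enum_ord.
Qed.

Lemma size_bits_of_set X : size (bits_of_set X) = n.
Proof. by rewrite size_map size_enum_ord. Qed.

Lemma set_of_bits_onto X : exists2 x, x \in bitseqs n & X = set_of_bits x.
Proof.
by exists (bits_of_set X); rewrite ?bits_of_setK // mem_bitseqs size_bits_of_set.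
Qed.

Lemma set_of_bits_inj : {in [pred x | size x == n] &, injective set_of_bits}.
Proof.
move=> x y /eqP size_x /eqP size_y /setP eq_xy.
apply: (eq_from_nth (x0 := false)) => [|i]; first by rewrite size_x size_y.
by rewrite size_x => lt_in; have := eq_xy (Ordinal lt_in); rewrite !inE.
Qed.

Definition bsum (F : seq bool -> nat) : nat := sumn (map F (bitseqs n)).

Lemma sum_over_sets (F : {set 'I_n} -> nat) :
  \sum_(X : {set 'I_n}) F X = bsum (fun x => F (set_of_bits x)).
Proof.
rewrite /bsum sumnE big_map -(big_map set_of_bits xpredT F).
apply/perm_big/uniq_perm; first exact: index_enum_uniq.
  rewrite map_inj_in_uniq ?bitseqs_uniq // => x y.
  by rewrite !mem_bitseqs; apply: set_of_bits_inj.
by move=> X; rewrite mem_index_enum; apply/esym/mapP; apply: set_of_bits_onto.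
Qed.

Lemma forall_ordE (p : nat -> bool) : [forall i : 'I_n, p i] = all p (iota 0 n).
Proof.
apply/forallP/allP => [p_ord i|p_iota i]; last by apply: p_iota; rewrite mem_iota ltn_ord.
by rewrite mem_iota => /andP[_ lt_in]; apply: (p_ord (Ordinal lt_in)).
Qed.

Lemma exists_ordE (p : nat -> bool) : [exists i : 'I_n, p i] = has p (iota 0 n).
Proof.
apply/existsP/hasP => [[i pi]|[i]]; first by exists (val i); rewrite ?mem_iota ?ltn_ord.
by rewrite mem_iota => /andP[_ lt_in] pi; exists (Ordinal lt_in).
Qed.

Lemma card_set_of_bits x : #|set_of_bits x| = count (bit x) (iota 0 n).
Proof.
rewrite cardsE -sum1_card (eq_bigl (fun i : 'I_n => bit x i)) //.
by rewrite -(big_mkord (bit x) (fun _ => 1)) -sum1_count /index_iota subn0.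
Qed.

Definition subb (x y : seq bool) : bool := all (fun i => bit x i ==> bit y i) (iota 0 n).
Definition properb (x y : seq bool) : bool := subb x y && ~~ subb y x.
Definition sub_diffb (e x y : seq bool) : bool :=
  all (fun i => bit e i ==> bit x i && ~~ bit y i) (iota 0 n).
Definition nonemptyb (x : seq bool) : bool := has (bit x) (iota 0 n).
Definition fullb (x : seq bool) : bool := all (bit x) (iota 0 n).

Lemma subbE x y : (set_of_bits x \subset set_of_bits y) = subb x y.
Proof.
rewrite /subb -forall_ordE; apply/subsetP/forallP => [sub i|sub i].
  by apply/implyP => xi; have := sub i; rewrite !inE; apply.
by rewrite !inE => xi; have /implyP := sub i; apply.
Qed.

Lemma properbE x y : (set_of_bits x \proper set_of_bits y) = properb x y.
Proof. by rewrite properE !subbE. Qed.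

Lemma sub_diffbE e x y :
  (set_of_bits e \subset set_of_bits x :\: set_of_bits y) = sub_diffb e x y.
Proof.
rewrite /sub_diffb -forall_ordE; apply/subsetP/forallP => [sub i|sub i].
  by apply/implyP => ei; have := sub i; rewrite !inE andbC; apply.
by rewrite !inE andbC => ei; have /implyP := sub i; apply.
Qed.

Lemma nonemptybE x : (set_of_bits x != set0) = nonemptyb x.
Proof.
rewrite /nonemptyb -exists_ordE.
by apply/set0Pn/existsP => -[i xi]; exists i; rewrite inE in xi *.
Qed.

Lemma fullbE x : (set_of_bits x != setT) = ~~ fullb x.
Proof.
rewrite /fullb -forall_ordE; congr negb; apply/eqP/forallP => [full i|full].
  by have := in_setT i; rewrite -full inE.
by apply/setP => i; rewrite !inE full.
Qed.

Lemma forall_in_map (P : {set 'I_n} -> bool) s :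
  [forall A in [set:: map set_of_bits s], P A] = all (fun a => P (set_of_bits a)) s.
Proof.
apply/forall_inP/allP => [P_set a a_s|P_seq A]; first by apply: P_set; rewrite inE map_f.
by rewrite inE => /mapP[a a_s ->]; apply: P_seq.
Qed.

Lemma exists_in_map (P : {set 'I_n} -> bool) s :
  [exists A in [set:: map set_of_bits s], P A] = has (fun a => P (set_of_bits a)) s.
Proof.
apply/exists_inP/hasP => [[A]|[a a_s Pa]].
  by rewrite inE => /mapP[a a_s ->] Pa; exists a.
by exists (set_of_bits a); rewrite ?inE ?map_f.
Qed.

Lemma set_of_bits_nseq b : set_of_bits (nseq n b) = if b then setT else set0.
Proof. by case: b; apply/setP => i; rewrite !inE /bit nth_nseq ltn_ord. Qed.

Definition ccb (Es s : seq (seq bool)) : bool :=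
  [&& all (fun a => nonemptyb a && ~~ fullb a) s,
      all (fun a => all (fun b => subb a b || subb b a) s) s &
      has (fun e => has (fun A => has (fun B =>
         [&& properb B A, sub_diffb e A B &
             all (fun C => ~~ (properb B C && properb C A)) s])
         (nseq n false :: s)) (nseq n true :: s)) Es].

Lemma ccbE Es s :
  ccface [set:: map set_of_bits Es] [set:: map set_of_bits s] = ccb Es s.
Proof.
have extend b : (if b then setT else set0) |: [set:: map set_of_bits s] =
                [set:: map set_of_bits (nseq n b :: s)].
  by rewrite /= set_cons set_of_bits_nseq.
rewrite /ccface /ccb !forall_in_map; congr [&& _, _ & _].
- by apply: eq_all => a; rewrite nonemptybE fullbE.
- by apply: eq_all => a; rewrite forall_in_map; apply: eq_all => b; rewrite !subbE.
rewrite exists_in_map; apply: eq_has => e.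
rewrite (extend true) exists_in_map; apply: eq_has => A.
rewrite (extend false) exists_in_map; apply: eq_has => B.
rewrite properbE sub_diffbE forall_in_map; congr [&& _, _ & _].
by apply: eq_all => C; rewrite !properbE.
Qed.
End BitModel.

Definition edges6 : seq (seq bool) :=
  [:: [:: true; true; true; false; false; false];
      [:: false; false; true; true; true; false];
      [:: true; false; false; false; true; true]].

Lemma H6_bits : H6 = [set:: map (set_of_bits 6) edges6].
Proof.
apply/setP => X; rewrite !inE /= -orbA.
congr [|| X == _, X == _ | X == _]; apply/setP => i; rewrite !inE;
  case: i => -[|[|[|[|[|[|//]]]]]] lt_i6; by rewrite -!val_eqE /= !inordK.
Qed.

Lemma uniform_H6 : uniform 3 H6.
Proof.
rewrite /uniform H6_bits forall_in_map; apply/allP => e.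
by rewrite !inE card_set_of_bits => /or3P[] /eqP ->.
Qed.

Lemma ccface_H6 s : ccface H6 [set:: map (set_of_bits 6) s] = ccb 6 edges6 s.
Proof. by rewrite H6_bits ccbE. Qed.

(* Exhaustive enumerations of the strict chains of length 1, 2, 3 that are
   faces; conditionals (rather than [&&]) make the evaluation short-circuit. *)
Lemma faces1_count : bsum 6 (fun a => ccb 6 edges6 [:: a]) = 36.
Proof. by vm_compute. Qed.

Lemma faces2_count : bsum 6 (fun a => bsum 6 (fun b =>
  if properb 6 a b then ccb 6 edges6 [:: a; b] else false)) = 108.
Proof. by vm_compute. Qed.

Lemma faces3_count : bsum 6 (fun a => bsum 6 (fun b => bsum 6 (fun c =>
  if properb 6 a b then if properb 6 b c then ccb 6 edges6 [:: a; b; c] else false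
  else false))) = 72.
Proof. by vm_compute. Qed.

Lemma faces2_extend : all (fun a => all (fun b =>
  if properb 6 a b then if ccb 6 edges6 [:: a; b] then
    has (fun c => if c \in [:: a; b] then false else ccb 6 edges6 [:: a; b; c])
      (bitseqs 6)
  else true else true) (bitseqs 6)) (bitseqs 6).
Proof. by vm_compute. Qed.

Lemma card_set_sum (U : finType) (Q : pred U) : #|[set u | Q u]| = \sum_u Q u.
Proof.
rewrite cardsE -sum1_card big_mkcond /=; apply: eq_bigr => u _.
by rewrite unfold_in; case: (Q u).
Qed.

Lemma sum_pair (A B : finType) (f : A * B -> nat) :
  \sum_(p : A * B) f p = \sum_(a : A) \sum_(b : B) f (a, b).
Proof. by rewrite pair_bigA; apply: eq_bigr => -[]. Qed.

Lemma face_chain_H6 F : coloring_complex H6 F -> chain F.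
Proof. by case/and3P. Qed.

Lemma fnum0_H6 : fnum (coloring_complex H6) 0 = 1.
Proof.
rewrite /fnum (_ : [set F | _ & _] = [set set0]) ?cards1 //.
apply/setP => F; rewrite !inE cards_eq0 andbC; case: eqP => //= ->.
have -> : set0 = [set:: map (set_of_bits 6) [::]] by apply/setP => X; rewrite !inE.
by rewrite /coloring_complex ccface_H6.
Qed.

Lemma fnum1_H6 : fnum (coloring_complex H6) 1 = 36.
Proof.
rewrite /fnum (@card_chains _ _ 1 _ (fun X : {set 'I_6} => [:: X])) //;
  last by case=> [|X [|]] // _; exists X.
- rewrite /coloring_complex card_set_sum sum_over_sets -faces1_count.
  congr sumn; apply: eq_map => a.
  by rewrite -[[:: _]]/(map (set_of_bits 6) [:: a]) ccface_H6.
- exact: face_chain_H6.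
- by move=> X Y [].
Qed.

Lemma fnum2_H6 : fnum (coloring_complex H6) 2 = 108.
Proof.
rewrite /fnum (@card_chains _ _ 2 _ (fun p : {set 'I_6} * {set 'I_6} => [:: p.1; p.2])) //;
  last by case=> [|X [|Y [|]]] // _; exists (X, Y).
- rewrite /coloring_complex card_set_sum sum_pair sum_over_sets -faces2_count; congr sumn.
  apply: eq_map => a; rewrite sum_over_sets; congr sumn; apply: eq_map => b.
  rewrite /= andbT -[[:: _; _]]/(map (set_of_bits 6) [:: a; b]) ccface_H6.
  by rewrite /proper_rel properbE; case: properb.
- exact: face_chain_H6.
- by move=> [X Y] [X' Y'] [-> ->].
Qed.

Lemma fnum3_H6 : fnum (coloring_complex H6) 3 = 72.
Proof.
rewrite /fnum (@card_chains _ _ 3 _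
    (fun p : {set 'I_6} * {set 'I_6} * {set 'I_6} => [:: p.1.1; p.1.2; p.2])) //;
  last by case=> [|X [|Y [|Z [|]]]] // _; exists (X, Y, Z).
- rewrite /coloring_complex card_set_sum !sum_pair sum_over_sets -faces3_count; congr sumn.
  apply: eq_map => a; rewrite sum_over_sets; congr sumn; apply: eq_map => b.
  rewrite sum_over_sets; congr sumn; apply: eq_map => c.
  rewrite /= andbT -[[:: _; _; _]]/(map (set_of_bits 6) [:: a; b; c]) ccface_H6.
  by rewrite /proper_rel !properbE; case: properb; case: properb.
- exact: face_chain_H6.
- by move=> [[X Y] Z] [[X' Y'] Z'] [-> -> ->].
Qed.

Lemma face_card_H6 F : coloring_complex H6 F -> #|F| <= 3.
Proof. exact: coloring_face_card uniform_H6. Qed.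

Lemma cdim_H6 : cdim1 (coloring_complex H6) = 3.
Proof.
apply/eqP; rewrite eqn_leq; apply/andP; split.
  by apply/bigmax_leqP => F; apply: face_card_H6.
have /card_gt0P[F] : 0 < fnum (coloring_complex H6) 3 by rewrite fnum3_H6.
rewrite inE => /andP[fF /eqP F3].
apply: leq_trans (@leq_bigmax_cond _ (coloring_complex H6) (fun F => #|F|) F fF).
by rewrite F3.
Qed.

(* h(t) = (t-1)^3 + 36 (t-1)^2 + 108 (t-1) + 72 = t^3 + 33 t^2 + 39 t - 1. *)
Lemma hvector_H6 : hvector (coloring_complex H6) = [:: 1%Z; 33%Z; 39%Z; (-1)%Z].
Proof.
have hpolyE : hpoly (coloring_complex H6) = Poly [:: -1; 39; 33; 1]%R.
  rewrite /hpoly cdim_H6 !big_ord_recr big_ord0 /=.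
  rewrite fnum0_H6 fnum1_H6 fnum2_H6 fnum3_H6 !cons_poly_def.
  rewrite -!natz !polyC_natr; ring.
by rewrite /hvector hpolyE cdim_H6 !map_cons !coef_Poly.
Qed.

Lemma euler_H6 : (\sum_(K | coloring_complex H6 K) (-1) ^+ #|K| = 1 :> int)%R.
Proof.
rewrite euler_fvector cdim_H6 !big_ord_recr big_ord0 /=.
by rewrite fnum0_H6 fnum1_H6 fnum2_H6 fnum3_H6.
Qed.

Lemma extend_face2_H6 (X Y : {set 'I_6}) : X \proper Y -> coloring_complex H6 [set X; Y] ->
  exists2 Z, Z \notin [set X; Y] & coloring_complex H6 [set X; Y; Z].
Proof.
have [x x_bits ->] := set_of_bits_onto X; have [y y_bits ->] := set_of_bits_onto Y.
have setE s : [set W in map (set_of_bits 6) s] = [set:: map (set_of_bits 6) s].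
  by apply/setP => W; rewrite !inE.
rewrite properbE /coloring_complex => xy.
rewrite {1}(_ : [set _; _] = [set W in map (set_of_bits 6) [:: x; y]]); last first.
  by apply/setP => W; rewrite !inE.
rewrite setE ccface_H6 => xy_face.
have := allP (allP faces2_extend x x_bits) y y_bits.
rewrite xy xy_face => /hasP[z z_bits]; case: ifP => // z_new xyz_face.
exists (set_of_bits 6 z).
  rewrite !inE; apply: contraFN z_new => /orP[] /eqP/set_of_bits_inj -> //;
    by rewrite ?inE ?eqxx ?orbT // -mem_bitseqs.
rewrite (_ : [set _; _; _] = [set W in map (set_of_bits 6) [:: x; y; z]]).
  by rewrite setE ccface_H6.
by apply/setP => W; rewrite !inE orbA.
Qed.

(* Facets have 1 or 3 vertices: the complex has vertices, and every face with
   two vertices extends to a larger one. *)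
Lemma facet_odd_H6 F : facet (coloring_complex H6) F -> odd #|F|.
Proof.
move=> [fF maxF]; have := face_card_H6 fF.
have card_ne0 : #|F| != 0.
  have /card_gt0P[K] : 0 < fnum (coloring_complex H6) 1 by rewrite fnum1_H6.
  rewrite inE cards_eq0 => /andP[fK /eqP K1]; apply/eqP => F0.
  by move: K1; rewrite (maxF K fK) F0 ?sub0set ?cards0.
have card_ne2 : #|F| != 2.
  apply/negP => /cards2P[X [Y [neqXY defF]]].
  have /forall_inP chF := face_chain_H6 fF.
  wlog XY : X Y neqXY defF / X \proper Y.
    move=> gen; have XF : X \in F by rewrite defF !inE eqxx.
    have YF : Y \in F by rewrite defF !inE eqxx orbT.
    case/orP: (forall_inP (chF X XF) Y YF) => sub.
      by apply: (gen X Y); rewrite // properEneq neqXY.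
    by apply: (gen Y X); rewrite 1?eq_sym // ?properEneq 1?eq_sym ?neqXY // defF setUC.
  have [Z Znew fZ] := extend_face2_H6 XY (etrans (esym (congr1 _ defF)) fF).
  have := maxF _ fZ; rewrite defF => /(_ (subsetUl _ _)) /setP /(_ Z).
  by rewrite !inE eqxx orbT; move: Znew; rewrite !inE => /negbTE ->.
by move: card_ne0 card_ne2; case: #|F| => [|[|[|[|]]]].
Qed.

Theorem mainTheorem10 :
  uniform 3 H6 /\
  hvector (coloring_complex H6) = [:: 1%Z; 33%Z; 39%Z; (-1)%Z] /\
  ~ partitionable (coloring_complex H6) /\
  (exists (n k : nat) (E : {set {set 'I_n}}),
      uniform k E /\
      (exists2 x, x \in hvector (coloring_complex E) & (x < 0)%R) /\
      ~ partitionable (coloring_complex E)).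
Proof.
have not_part : ~ partitionable (coloring_complex H6).
  by apply: odd_facets_not_partitionable facet_odd_H6 _; rewrite euler_H6.
split; first exact: uniform_H6.
split; first exact: hvector_H6.
split; first exact: not_part.
exists 6, 3, H6; split; first exact: uniform_H6.
by split=> //; exists (-1)%Z; rewrite ?hvector_H6.
Qed.
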